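(* Let $L, e_i, e_j, e_h, e_w, e_{v_i}, e_{v_j}$ be mutually independent random variables, where $L, e_i, e_j, e_h, e_w$ are mean-zero Gaussian. For constants $a_i, a_j, a_h, a_w$ define $X_m = a_m L + e_m$ for $m \in \{i,j,h,w\}$. Let $f, g$ be measurable functions such that $V_i = f(X_i, e_{v_i})$ and $V_j = g(X_j, e_{v_j})$ have finite second moments. Then the tetrad constraint for the partition that does not pair $V_i$ with $V_j$ holds: $$\mathrm{Cov}(V_i,X_w)\,\mathrm{Cov}(V_j,X_h) = \mathrm{Cov}(V_i,X_h)\,\mathrm{Cov}(V_j,X_w).$$
   Context: This describes a pure 1-factor measurement model with a single latent common cause $L$ of linear Gaussian indicators, in which two of the indicators $X_i, X_j$ are replaced by variables $V_i, V_j$ that are functions of them and of independent noise terms. *)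

From HB Require Import structures.
From mathcomp Require Import all_boot all_order all_algebra.
From mathcomp Require Import all_classical all_reals all_analysis.
Set Implicit Arguments. Unset Strict Implicit. Unset Printing Implicit Defensive.
Import Order.TTheory GRing.Theory Num.Theory.
Local Open Scope classical_set_scope.
Local Open Scope ring_scope.

Definition mutually_independent {d} {T : measurableType d} {R : realType}
    (P : probability T R) (I : finType) (X : I -> T -> R) : Prop :=
  forall (J : {set I}) (B : I -> set R),
    (forall i, measurable (B i)) ->
    P (\bigcap_(i in [set i | i \in J]) (X i @^-1` B i)) =
    (\prod_(i in J) P (X i @^-1` B i))%E.

Definition centered_gaussian {d} {T : measurableType d} {R : realType}
    (P : probability T R) (X : T -> R) : Prop :=
  exists s : R, s != 0 /\
    forall A : set R, measurable A -> P (X @^-1` A) = normal_prob 0 s A.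

From HB Require Import structures.
From mathcomp Require Import all_boot all_order all_algebra.
From mathcomp Require Import all_classical all_reals all_analysis.
From mathcomp Require Import measurable_realfun ring.
Import Order.TTheory GRing.Theory Num.Theory.
Local Open Scope classical_set_scope.
Local Open Scope ring_scope.

(** V_i is a measurable function of (L, e_i, e_vi), a family independent of
   e_h and e_w, so Cov(V_i, e_h) = Cov(V_i, e_w) = 0; by bilinearity
   Cov(V_i, X_m) = a_m Cov(V_i, L) for m = h, w, and likewise for V_j.  Both
   sides of the tetrad equation are then a_h a_w Cov(V_i, L) Cov(V_j, L).
   Gaussianity is only used to know that L, e_h and e_w are square
   integrable. *)

Section normal_second_moment.
Context (R : realType).
Local Notation mu := (@lebesgue_measure R).

Lemma sqr_normal_pdf_le (s x : R) : s != 0 ->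
  x ^+ 2 * normal_pdf 0 s x <=
  normal_peak s * (s ^+ 2 *+ 4) / normal_peak (s * Num.sqrt 2) *
    normal_pdf 0 (s * Num.sqrt 2) x.
Proof.
move=> s0.
have s2_neq0 : s * Num.sqrt 2 != 0 by rewrite mulf_neq0 // gt_eqF // sqrtr_gt0.
have peak_neq0 : normal_peak (s * Num.sqrt 2) != 0.
  by rewrite gt_eqF // normal_peak_gt0.
rewrite !normal_pdfE //= /normal_fun !subr0.
(* with u := x^2 / 4s^2 the left side is C * (u e^-u) * normal_pdf 0 (s * sqrt 2) x *)
set u := x ^+ 2 / (s ^+ 2 *+ 4).
have u_ge0 : 0 <= u by rewrite divr_ge0 ?sqr_ge0 // mulrn_wge0 // sqr_ge0.
have -> : - x ^+ 2 / (s ^+ 2 *+ 2) = - u + - u by rewrite /u; field.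
have -> : - x ^+ 2 / ((s * Num.sqrt 2) ^+ 2 *+ 2) = - u.
  by rewrite exprMn sqr_sqrtr // /u; field.
have -> : x ^+ 2 = s ^+ 2 *+ 4 * u by rewrite /u; field.
set A := normal_peak s * (s ^+ 2 *+ 4) * expR (- u).
have A_ge0 : 0 <= A.
  by rewrite !mulr_ge0 ?expR_ge0 ?normal_peak_ge0 // mulrn_wge0 // sqr_ge0.
have -> : s ^+ 2 *+ 4 * u * (normal_peak s * expR (- u + - u)) =
  A * (u * expR (- u)) by rewrite expRD /A; ring.
have -> : normal_peak s * (s ^+ 2 *+ 4) / normal_peak (s * Num.sqrt 2) *
   (normal_peak (s * Num.sqrt 2) * expR (- u)) = A by rewrite /A; field.
rewrite ler_piMr // expRN ler_pdivrMr ?expR_gt0 // mul1r.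
by apply: le_trans (expR_ge1Dx u); rewrite lerDr.
Qed.

Local Open Scope ereal_scope.

Lemma ge0_integral_normal_prob (m s : R) (f : R -> \bar R) :
  measurable_fun setT f -> (forall x, 0 <= f x) ->
  \int[normal_prob m s]_x f x = \int[mu]_x (f x * (normal_pdf m s x)%:E).
Proof.
move=> mf f_ge0; have dom := normal_prob_dominates m s.
rewrite -(Radon_Nikodym_SigmaFinite.change_of_variables dom) //.
have mpdf : measurable_fun setT (fun x => (normal_pdf m s x)%:E).
  by apply/measurable_EFinP; exact: measurable_normal_pdf.
apply: ae_eq_integral => //; [apply: emeasurable_funM => //..|].
  exact/measurable_int/(Radon_Nikodym_SigmaFinite.f_integrable dom).
apply: ae_eqe_mul2l; apply: integral_ae_eq => //.
  exact: Radon_Nikodym_SigmaFinite.f_integrable.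
by move=> E _ mE; rewrite -Radon_Nikodym_SigmaFinite.f_integral.
Qed.

Lemma normal_prob_sqr_lty (s : R) : (s != 0)%R ->
  \int[normal_prob 0 s]_x (x ^+ 2)%:E < +oo.
Proof.
move=> s0.
have msqr : measurable_fun setT (fun x : R => (x ^+ 2)%:E).
  by apply/measurable_EFinP; exact: measurable_funX.
have mpdf (t : R) : measurable_fun setT (fun x => (normal_pdf 0 t x)%:E).
  by apply/measurable_EFinP; exact: measurable_normal_pdf.
rewrite ge0_integral_normal_prob //; last by move=> x; rewrite lee_fin sqr_ge0.
pose K := (normal_peak s * (s ^+ 2 *+ 4) / normal_peak (s * Num.sqrt 2))%R.
apply: (@le_lt_trans _ _ (\int[mu]_x (K%:E * (normal_pdf 0 (s * Num.sqrt 2) x)%:E))).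
  apply: ge0_le_integral => //.
  - by move=> x _; rewrite -EFinM lee_fin mulr_ge0 ?sqr_ge0 ?normal_pdf_ge0.
  - by apply: emeasurable_funM; [exact: msqr|exact: mpdf].
  - by apply: emeasurable_funM => //; exact: mpdf.
  - by move=> x _; rewrite -!EFinM lee_fin; exact: sqr_normal_pdf_le.
have K_ge0 : (0 <= K)%R.
  by rewrite !mulr_ge0 ?invr_ge0 ?normal_peak_ge0 // mulrn_wge0 // sqr_ge0.
rewrite ge0_integralZl ?lee_fin //.
- by rewrite integral_normal_pdf mule1 ltry.
- exact: mpdf.
- by move=> x ?; exact: normal_pdf_ge0.
Qed.

End normal_second_moment.

Lemma sqr_integral_lty_Lfun2 d (T : measurableType d) (R : realType)
    (mu : {measure set T -> \bar R}) (f : T -> R) :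
  measurable_fun setT f -> (\int[mu]_x (f x ^+ 2)%:E < +oo)%E ->
  f \in Lfun mu 2%:E.
Proof.
move=> mf f2_lty; rewrite inE; apply/andP; split; first by rewrite inE.
rewrite inE /= /finite_norm unlock /Lnorm; apply: poweR_lty.
under eq_integral => x _.
  rewrite abse_EFin poweR_EFin powR_mulrn ?normr_ge0 // real_normK ?num_real //.
  over.
exact: f2_lty.
Qed.

Section centered_gaussian.
Context {d} {T : measurableType d} {R : realType} (P : probability T R).
Local Open Scope ereal_scope.

Lemma centered_gaussian_Lfun2 (X : {RV P >-> R}) :
  centered_gaussian P X -> (X : T -> R) \in Lfun P 2%:E.
Proof.
move=> [s [s0 lawX]]; apply: sqr_integral_lty_Lfun2 => //.
(* normal_prob lives on the Lebesgue sigma-algebra measurableTypeR R, so the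
   law of X is taken there rather than on the canonical structure of R *)
pose Y : T -> measurableTypeR R := X.
have msqr : measurable_fun setT (fun y : measurableTypeR R => (y ^+ 2)%:E).
  by apply/measurable_EFinP; exact: measurable_funX.
have -> : \int[P]_x (X x ^+ 2)%:E = \int[pushforward P Y]_y (y ^+ 2)%:E.
  rewrite ge0_integral_pushforward //; last by move=> y _; rewrite lee_fin sqr_ge0.
  exact: (measurable_funPT X).
suff -> : \int[pushforward P Y]_y (y ^+ 2)%:E = \int[normal_prob 0 s]_y (y ^+ 2)%:E.
  exact: normal_prob_sqr_lty.
apply: eq_measure_integral => [|mY A mA _]; first exact: (measurable_funPT X).
exact: lawX.
Qed.
End centered_gaussian.

Section independence.
Context {d} {T : measurableType d} {R : realType} (P : probability T R).
Local Open Scope ereal_scope.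

Lemma indep_event_g_sigma (G : set (set T)) (B : set T) :
  G `<=` measurable -> setI_closed G -> G setT -> measurable B ->
  (forall A, G A -> P (A `&` B) = P A * P B) ->
  forall A, <<s G >> A -> P (A `&` B) = P A * P B.
Proof.
move=> Gm GI GT mB indepG A GA.
have PB_ge0 : (0 <= fine (P B))%R by apply: fine_ge0.
have PBE : P B = (fine (P B))%:E by rewrite fineK // fin_num_measure.
(* A |-> P (A `&` B) and A |-> P A * P B are finite measures that agree on G *)
pose m1 := mrestr P mB.
pose m2 := mscale (NngNum PB_ge0) P.
have m1_lty (k : nat) : m1 setT < +oo.
  by rewrite /m1 /mrestr setTI (le_lt_trans (probability_le1 _ _)) ?ltry.
have m12 A' : G A' -> m1 A' = m2 A'.
  by move=> GA'; rewrite /m1 /m2 /mrestr /mscale /= -PBE muleC; exact: indepG.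
have cover : \bigcup_(k : nat) setT = [set: T] by rewrite bigcup_const.
have := g_sigma_algebra_measure_unique G Gm (fun=> setT) (fun=> GT) cover
  m1 m2 GI m12 m1_lty A GA.
move=> m12A; transitivity (m2 A); first exact: m12A.
by rewrite /m2 /mscale /= -PBE muleC.
Qed.

Definition independent2 (V Z : T -> R) := forall A C : set R,
  measurable A -> measurable C ->
  P (V @^-1` A `&` Z @^-1` C) = P (V @^-1` A) * P (Z @^-1` C).

Lemma expectationM_independent2 (V Z : T -> R) : independent2 V Z ->
  V \in Lfun P 2%:E -> Z \in Lfun P 2%:E -> 'E_P[V * Z] = 'E_P[V] * 'E_P[Z].
Proof.
move=> VZindep V2 Z2.
have Pfin : P setT \is a fin_num := fin_num_measure P _ measurableT.
have /Lfun1_integrable iV := Lfun_subset12 Pfin V2.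
have /Lfun1_integrable iZ := Lfun_subset12 Pfin Z2.
have /Lfun1_integrable iVZ := Lfun2_mul_Lfun1 V2 Z2.
have mV : measurable_fun setT V by apply/measurable_EFinP; exact: measurable_int iV.
have mZ : measurable_fun setT Z by apply/measurable_EFinP; exact: measurable_int iZ.
have mVZ : measurable_fun setT (fun w => (V w, Z w)) := measurable_fun_pair mV mZ.
pose muV := distribution P (mfun_Sub (mem_set mV)).
pose muZ := distribution P (mfun_Sub (mem_set mZ)).
pose mu := distribution P (mfun_Sub (mem_set mVZ)).
have mu_prod X : measurable X -> (muV \x muZ) X = mu X.
  by apply: product_measure_unique => A C mA mC; rewrite -VZindep.
pose mul : R * R -> \bar R := fun z => (z.1 * z.2)%:E.
have mmul : measurable_fun setT mul.
  by apply/measurable_EFinP; exact: measurable_funM.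
have mEFin := @EFin_measurable R setT.
have imuV : muV.-integrable setT EFin := integrable_pushforward mV mEFin iV measurableT.
have imuZ : muZ.-integrable setT EFin := integrable_pushforward mZ mEFin iZ measurableT.
have imu : mu.-integrable setT mul := integrable_pushforward mVZ mmul iVZ measurableT.
have EVE : 'E_P[V] = \int[muV]_y y%:E.
  by rewrite unlock integral_distribution.
have EZE : 'E_P[Z] = \int[muZ]_y y%:E.
  by rewrite unlock integral_distribution.
have EVZE : 'E_P[V * Z] = \int[muV \x muZ]_z mul z.
  rewrite unlock (eq_measure_integral mu); last by move=> A mA _; exact: mu_prod.
  by rewrite integral_distribution.
have imul : (muV \x muZ).-integrable setT mul.
  apply/integrableP; split => //.
  rewrite (eq_measure_integral mu); last by move=> A mA _; exact: mu_prod.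
  by case/integrableP : imu.
have EZ_fin : 'E_P[Z] \is a fin_num by exact/expectation_fin_num/(Lfun_subset12 Pfin).
rewrite EVZE -(integral12_prod_meas1 imul) /fubini_F /=.
under eq_integral => x _.
  under eq_integral => y _ do rewrite /mul /= EFinM.
  rewrite integralZl // -EZE -(fineK EZ_fin).
  over.
by rewrite /= integralZr // -EVE fineK.
Qed.

Lemma covariance_independent2 (V Z : T -> R) : independent2 V Z ->
  V \in Lfun P 2%:E -> Z \in Lfun P 2%:E -> covariance P V Z = 0.
Proof.
move=> VZindep V2 Z2; have Pfin := fin_num_measure P _ measurableT.
have [V1 Z1] := (Lfun_subset12 Pfin V2, Lfun_subset12 Pfin Z2).
rewrite covarianceE ?Lfun2_mul_Lfun1 // expectationM_independent2 // subee //.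
by rewrite fin_numM // expectation_fin_num.
Qed.

Section cylinder_events.
Context {I : finType} (X : I -> T -> R) (J : {set I}).

Definition cylinder_events : set (set T) :=
  [set A | exists2 B : I -> set R, (forall i, measurable (B i)) &
     A = \bigcap_(i in [set i | i \in J]) (X i @^-1` B i)].

Lemma cylinder_events_setT : cylinder_events setT.
Proof.
exists (fun=> setT) => //; apply/seteqP; split => // w _ i _.
Qed.

Lemma cylinder_events_setI_closed : setI_closed cylinder_events.
Proof.
move=> _ _ [B mB ->] [C mC ->]; exists (fun i => B i `&` C i).
  by move=> i; exact: measurableI.
by rewrite -bigcapI.
Qed.

Lemma cylinder_events_measurable :
  (forall i, i \in J -> measurable_fun setT (X i)) ->
  cylinder_events `<=` measurable.
Proof.
move=> mX _ [B mB ->].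
apply: fin_bigcap_measurable => [|i iJ]; first exact: finite_finset.
by rewrite -[_ @^-1` _]setTI; apply: mX.
Qed.

Lemma measurable_fun_cylinder_events i : i \in J ->
  measurable_fun (setT : set (g_sigma_algebraType cylinder_events)) (X i).
Proof.
move=> iJ _ C mC; rewrite setTI; apply: sub_sigma_algebra.
exists (fun j => if j == i then C else setT).
  by move=> j; case: ifP.
apply/seteqP; split => [w Cw j _|w]; first by case: eqP => // ->.
by move/(_ i iJ); rewrite eqxx.
Qed.

Lemma mutually_independent_cylinder_events s : mutually_independent P X ->
  s \notin J -> forall A C, cylinder_events A -> measurable C ->
  P (A `&` X s @^-1` C) = P A * P (X s @^-1` C).
Proof.
move=> indepX sJ _ C [B mB ->] mC.
pose B' i := if i == s then C else B i.
have mB' i : measurable (B' i) by rewrite /B'; case: eqP.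
have B'J : {in J, B' =1 B}.
  by move=> i iJ; rewrite /B'; case: eqP => // isE; rewrite -isE iJ in sJ.
have capJ : \bigcap_(i in [set i | i \in J]) (X i @^-1` B i) =
    \bigcap_(i in [set i | i \in J]) (X i @^-1` B' i).
  by apply: eq_bigcapr => i iJ; rewrite B'J.
have capsJ : \bigcap_(i in [set i | i \in s |: J]) (X i @^-1` B' i) =
    \bigcap_(i in [set i | i \in J]) (X i @^-1` B' i) `&` X s @^-1` C.
  apply/seteqP; split => [w Bw|w [BJw Csw] i].
    split => [i iJ|]; first by apply: Bw; rewrite /= inE iJ orbT.
    by have := Bw s; rewrite /B' eqxx; apply; rewrite /= !inE eqxx.
  by rewrite /= !inE => /orP[/eqP->|iJ]; [rewrite /B' eqxx|exact: BJw].
by rewrite capJ -capsJ !indepX // big_setU1 //= [in RHS]muleC /B' eqxx.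
Qed.

Lemma covariance_cylinder_events0 s (V : T -> R) : mutually_independent P X ->
  (forall i, i \in J -> measurable_fun setT (X i)) -> s \notin J ->
  measurable_fun (setT : set (g_sigma_algebraType cylinder_events)) V ->
  V \in Lfun P 2%:E -> X s \in Lfun P 2%:E -> covariance P V (X s) = 0.
Proof.
move=> indepX mX sJ mV V2 Xs2; apply: covariance_independent2 => // A C mA mC.
have mXs : measurable_fun setT (X s) by move/sub_Lfun_mfun : Xs2; rewrite inE.
apply: (indep_event_g_sigma _ _ (cylinder_events_measurable mX)
  cylinder_events_setI_closed cylinder_events_setT).
- by rewrite -[_ @^-1` _]setTI; exact: mXs.
- by move=> A' cylA'; exact: mutually_independent_cylinder_events.
- by rewrite -[_ @^-1` _]setTI; exact: mV.
Qed.

End cylinder_events.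

End independence.

Section tetrad.
Context {d} {T : measurableType d} {R : realType} (P : probability T R).
Local Open Scope ereal_scope.

Lemma covarianceZDr (V U W : T -> R) (a : R) :
  V \in Lfun P 2%:E -> U \in Lfun P 2%:E -> W \in Lfun P 2%:E ->
  covariance P V (fun w => a * U w + W w)%R =
  a%:E * covariance P V U + covariance P V W.
Proof.
move=> V2 U2 W2; have Pfin := fin_num_measure P _ measurableT.
have [V1 U1] := (Lfun_subset12 Pfin V2, Lfun_subset12 Pfin U2).
have -> : (fun w => a * U w + W w)%R = ((a \o* U) \+ W)%R.
  by apply: funext => w /=; rewrite mulrC.
rewrite covarianceDr ?covarianceZr ?Lfun2_mul_Lfun1 //.
by apply: Lfun_scale => //; rewrite ler1n.
Qed.

Lemma covariance_measured_indep0 {I : finType} (X : I -> T -> R)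
    (p q r s : I) (a : R) (h : R * R -> R) :
  mutually_independent P X -> (forall i, measurable_fun setT (X i)) ->
  measurable_fun setT h -> s \notin [set p; q; r]%SET ->
  (fun w => h (a * X p w + X q w, X r w))%R \in Lfun P 2%:E ->
  X s \in Lfun P 2%:E ->
  covariance P (fun w => h (a * X p w + X q w, X r w))%R (X s) = 0.
Proof.
move=> indepX mX mh spqr V2 Xs2; set J := [set p; q; r]%SET.
apply: (covariance_cylinder_events0 P X J) => //.
have mXpqr i : i \in J ->
    measurable_fun (setT : set (g_sigma_algebraType (cylinder_events X J))) (X i).
  exact: measurable_fun_cylinder_events.
apply: measurableT_comp => //; apply: measurable_fun_pair.
  apply: measurable_funD; last by apply: mXpqr; rewrite !inE eqxx orbT.
  by apply: measurable_funM => //; apply: mXpqr; rewrite !inE eqxx.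
by apply: mXpqr; rewrite !inE eqxx !orbT.
Qed.

End tetrad.

Theorem mainTheorem2 (d : measure_display) (T : measurableType d) (R : realType)
  (P : probability T R)
  (L e_i e_j e_h e_w e_vi e_vj : {RV P >-> R})
  (a_i a_j a_h a_w : R) (f g : (R * R)%type -> R) :
  mutually_independent P
    (fun k : 'I_7 => nth (L : T -> R)
       [:: (L : T -> R); (e_i : T -> R); (e_j : T -> R); (e_h : T -> R);
           (e_w : T -> R); (e_vi : T -> R); (e_vj : T -> R)] k) ->
  centered_gaussian P L ->
  centered_gaussian P e_i -> centered_gaussian P e_j ->
  centered_gaussian P e_h -> centered_gaussian P e_w ->
  measurable_fun setT f -> measurable_fun setT g ->
  let X_i := fun w => a_i * L w + e_i w in
  let X_j := fun w => a_j * L w + e_j w in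
  let X_h := fun w => a_h * L w + e_h w in
  let X_w := fun w => a_w * L w + e_w w in
  let V_i := fun w => f (X_i w, e_vi w) in
  let V_j := fun w => g (X_j w, e_vj w) in
  V_i \in Lfun P 2%:E -> V_j \in Lfun P 2%:E ->
  (covariance P V_i X_w * covariance P V_j X_h
   = covariance P V_i X_h * covariance P V_j X_w)%E.
Proof.
move=> indepX gL _ _ gh gw mf mg X_i X_j X_h X_w V_i V_j Vi2 Vj2.
set X := (fun k : 'I_7 => _) in indepX.
have mX (k : 'I_7) : measurable_fun setT (X k).
  case: k => -[|[|[|[|[|[|[|k]]]]]]] ?; rewrite /X /= ?nth_nil;
  exact: measurable_funP.
have L2 := centered_gaussian_Lfun2 P L gL.
have eh2 := centered_gaussian_Lfun2 P e_h gh.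
have ew2 := centered_gaussian_Lfun2 P e_w gw.
have uncorrelated p q r s a h :=
  covariance_measured_indep0 P X p q r s a h indepX mX.
rewrite /X_w /X_h !covarianceZDr //.
rewrite [covariance P V_i e_w](uncorrelated 0 1 5 4 a_i f mf) ?inE //.
rewrite [covariance P V_i e_h](uncorrelated 0 1 5 3 a_i f mf) ?inE //.
rewrite [covariance P V_j e_w](uncorrelated 0 2 6 4 a_j g mg) ?inE //.
rewrite [covariance P V_j e_h](uncorrelated 0 2 6 3 a_j g mg) ?inE //.
by rewrite !adde0 muleACA [RHS]muleACA [(a_h%:E * _)%E]muleC.
Qed.
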